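(* Let $J'=(z_w,z_w')$ be a nonempty open interval, let $r:J'\to\mathbb{R}$ be differentiable and non-increasing, and let $h:J'\to\mathbb{R}$ be differentiable with $\dot h(z)=1+h(z)^2-2r(z)h(z)$ on $J'$, having exactly one zero $z_*\in J'$. Let $G(z)=z-\dfrac{2h(z)}{2+h(z)^2-2r(z)h(z)}$. (1) If $0<r(z)<1$ for all $z\in(z_*,z_w')$, then $G$ is differentiable on $(z_*,z_w')$ and $\dot G(z)\ge 0$ for all $z\in(z_*,z_w')$. (2) If $-1<r(z)<0$ for all $z\in(z_w,z_* )$, then $G$ is differentiable on $(z_w,z_* )$ and $\dot G(z)\ge 0$ for all $z\in(z_w,z_* )$.
   Context: $\dot{}$ denotes differentiation with respect to $z$. Here $h<0$ on $(z_w,z_* )$ and $h>0$ on $(z_*,z_w')$ (consequence of $h(z_* )=0$, $\dot h(z_* )=1$ and uniqueness of the zero). *)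

From Stdlib Require Import Reals.
From Coquelicot Require Import Coquelicot.
Open Scope R_scope.

Definition in_oi (a b : Rbar) (z : R) : Prop := Rbar_lt a z /\ Rbar_lt z b.

Definition Gfun (r h : R -> R) (z : R) : R :=
  z - 2 * h z / (2 + h z ^ 2 - 2 * r z * h z).

From Stdlib Require Import Reals Lra Psatz.
From Coquelicot Require Import Coquelicot.
Open Scope R_scope.

(* With [H := 1 + h^2 - 2 r h = h'] the denominator of [G] is [1 + H], and a
   direct computation gives
     [G' = ((H - 1)^2 + 2 H h^2 - 4 r' h^2) / (1 + H)^2].
   Since [H = (h - r)^2 + 1 - r^2 > 0] when [|r| < 1], and [r' <= 0] because [r]
   is non-increasing, [G' >= 0].  The zero [z_*] of [h] only serves to split
   [J'] into the two halves. *)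

Definition riccati (r h : R -> R) (z : R) : R := 1 + h z ^ 2 - 2 * r z * h z.

Lemma is_derive_le0_locally_nonincreasing (f : R -> R) (x l : R) :
  locally x (fun y => x <= y -> f y <= f x) -> is_derive f x l -> l <= 0.
Proof.
  intros [eps Hloc] Hd.
  apply is_derive_Reals in Hd.
  destruct (Rle_lt_dec l 0) as [Hl | Hl]; [exact Hl | exfalso].
  destruct (Hd (l / 2) ltac:(lra)) as [delta Hdelta].
  pose proof (cond_pos eps) as Heps; pose proof (cond_pos delta) as Hdel.
  set (t := Rmin eps delta / 2).
  assert (Ht : 0 < t < Rmin eps delta).
  { unfold t; pose proof (Rmin_pos eps delta Heps Hdel); lra. }
  pose proof (Rmin_l eps delta); pose proof (Rmin_r eps delta).
  assert (Hdecr : f (x + t) <= f x).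
  { apply Hloc; [| lra].
    change (Rabs (x + t - x) < eps); rewrite Rabs_pos_eq; lra. }
  assert (Hquot : (f (x + t) - f x) / t <= 0).
  { apply Rmult_le_0_r; [lra | left; apply Rinv_0_lt_compat; lra]. }
  assert (Hclose : Rabs ((f (x + t) - f x) / t - l) < l / 2).
  { apply Hdelta; [lra | rewrite Rabs_pos_eq; lra]. }
  apply Rabs_def2 in Hclose; lra.
Qed.

Lemma in_oi_locally (a b : Rbar) (x : R) :
  in_oi a b x -> locally x (in_oi a b).
Proof.
  intros Hx.
  apply (open_and (fun y : R => Rbar_lt a y) (fun y : R => Rbar_lt y b));
    [apply open_Rbar_gt | apply open_Rbar_lt | exact Hx].
Qed.

Lemma is_derive_le0_nonincreasing_on (f : R -> R) (a b : Rbar) (x l : R) :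
  (forall u v, in_oi a b u -> in_oi a b v -> u <= v -> f v <= f u) ->
  in_oi a b x -> is_derive f x l -> l <= 0.
Proof.
  intros Hmon Hx.
  apply is_derive_le0_locally_nonincreasing.
  apply (filter_imp (in_oi a b)); [| exact (in_oi_locally a b x Hx)].
  intros y Hy Hxy; exact (Hmon x y Hx Hy Hxy).
Qed.

Lemma one_add_sqr_sub_pos (c y : R) : -1 < c < 1 -> 0 < 1 + y ^ 2 - 2 * c * y.
Proof. intros Hc; assert (0 <= (y - c) ^ 2) by apply pow2_ge_0; nra. Qed.

Lemma is_derive_Gfun (r h : R -> R) (z p : R) :
  1 + riccati r h z <> 0 -> is_derive r z p -> is_derive h z (riccati r h z) ->
  is_derive (Gfun r h) z
    (((riccati r h z - 1) ^ 2 + 2 * riccati r h z * h z ^ 2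
      - 4 * p * h z ^ 2) / (1 + riccati r h z) ^ 2).
Proof.
  unfold riccati, Gfun; intros HD Dr Dh.
  assert (Hden : 2 + h z * (h z * 1) + - (2 * r z * h z) <> 0)
    by (contradict HD; nra).
  auto_derive.
  - repeat split; try (eexists; eassumption); exact Hden.
  - rewrite (is_derive_unique (fun x : R => h x) z _ Dh),
      (is_derive_unique (fun x : R => r x) z _ Dr).
    field; tauto.
Qed.

Lemma Gfun_derive_nonneg (r h : R -> R) (z p : R) :
  -1 < r z < 1 -> p <= 0 -> is_derive r z p -> is_derive h z (riccati r h z) ->
  ex_derive (Gfun r h) z /\ 0 <= Derive (Gfun r h) z.
Proof.
  intros Hr Hp Dr Dh.
  assert (HH : 0 < riccati r h z) by exact (one_add_sqr_sub_pos (r z) (h z) Hr).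
  pose proof (is_derive_Gfun r h z p ltac:(lra) Dr Dh) as DG.
  split; [eexists; exact DG |].
  rewrite (is_derive_unique _ _ _ DG).
  apply Rdiv_le_0_compat; [| nra].
  assert (0 <= (riccati r h z - 1) ^ 2) by apply pow2_ge_0.
  assert (0 <= h z ^ 2) by apply pow2_ge_0.
  nra.
Qed.

Theorem lemma3p3 (zw zw' : Rbar) (r h : R -> R) (zs : R) :
  Rbar_lt zw zw' ->
  (forall z, in_oi zw zw' z -> ex_derive r z) ->
  (forall x y, in_oi zw zw' x -> in_oi zw zw' y -> x <= y -> r y <= r x) ->
  (forall z, in_oi zw zw' z -> is_derive h z (1 + h z ^ 2 - 2 * r z * h z)) ->
  in_oi zw zw' zs -> h zs = 0 ->
  (forall z, in_oi zw zw' z -> h z = 0 -> z = zs) ->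
  ((forall z : R, zs < z -> Rbar_lt z zw' -> 0 < r z < 1) ->
     forall z : R, zs < z -> Rbar_lt z zw' ->
       ex_derive (Gfun r h) z /\ 0 <= Derive (Gfun r h) z)
  /\
  ((forall z : R, Rbar_lt zw z -> z < zs -> -1 < r z < 0) ->
     forall z : R, Rbar_lt zw z -> z < zs ->
       ex_derive (Gfun r h) z /\ 0 <= Derive (Gfun r h) z).
Proof.
  intros _ Hrd Hmon Hhd [Hzs_lo Hzs_hi] _ _.
  assert (Hgen : forall z, in_oi zw zw' z -> -1 < r z < 1 ->
    ex_derive (Gfun r h) z /\ 0 <= Derive (Gfun r h) z).
  { intros z Hz Hr.
    destruct (Hrd z Hz) as [p Dr].
    apply (Gfun_derive_nonneg r h z p Hr); [| exact Dr | exact (Hhd z Hz)].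
    exact (is_derive_le0_nonincreasing_on r zw zw' z p Hmon Hz Dr). }
  split; intros Hr z Hz_lo Hz_hi; pose proof (Hr z Hz_lo Hz_hi); apply Hgen; try lra.
  - split; [exact (Rbar_lt_trans zw zs z Hzs_lo Hz_lo) | exact Hz_hi].
  - split; [exact Hz_lo | exact (Rbar_lt_trans z zs zw' Hz_hi Hzs_hi)].
Qed.
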